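(* For every $d\ge1$, $H_d\le d!$.
   Context: A sublattice $\Lambda'$ of a $d$-dimensional lattice $\Lambda$ is hollow if it is generated by $d$ linearly independent elements $v_1,\dots,v_d\in\Lambda$ such that the interior of the convex hull of $\pm v_1,\dots,\pm v_d$ contains no nonzero element of $\Lambda$. $H_d$ denotes the maximal index $[\Lambda:\Lambda']$ of a hollow sublattice $\Lambda'$ of a $d$-dimensional lattice $\Lambda$. *)

From HB Require Import structures.
From mathcomp Require Import all_boot all_order all_algebra.
Set Implicit Arguments. Unset Strict Implicit. Unset Printing Implicit Defensive.
Import Order.TTheory GRing.Theory Num.Theory.
Local Open Scope ring_scope.

Definition in_lattice (R : realFieldType) (d : nat) (B : 'M[R]_d)
  (x : 'rV[R]_d) : Prop :=
  exists z : 'rV[int]_d, x = map_mx (fun k : int => k%:~R) z *m B.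

Definition in_span_int (R : realFieldType) (d : nat) (v : 'I_d -> 'rV[R]_d)
  (x : 'rV[R]_d) : Prop :=
  exists c : 'I_d -> int, x = \sum_(i < d) (c i)%:~R *: v i.

Definition in_sym_hull (R : realFieldType) (d : nat) (v : 'I_d -> 'rV[R]_d)
  (x : 'rV[R]_d) : Prop :=
  exists a b : 'I_d -> R,
    (forall i, 0 <= a i) /\ (forall i, 0 <= b i) /\
    \sum_(i < d) a i + \sum_(i < d) b i = 1 /\
    x = \sum_(i < d) a i *: v i + \sum_(i < d) b i *: (- v i).

Definition in_interior (R : realFieldType) (d : nat) (S : 'rV[R]_d -> Prop)
  (x : 'rV[R]_d) : Prop :=
  exists2 e : R, 0 < e &
    forall y : 'rV[R]_d, (forall j, `|y 0 j - x 0 j| < e) -> S y.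

From HB Require Import structures.
From mathcomp Require Import all_boot all_order all_algebra.
From mathcomp Require Import zify ring lra.
Import Order.TTheory GRing.Theory Num.Theory.
Local Open Scope ring_scope.
Set Implicit Arguments. Unset Strict Implicit. Unset Printing Implicit Defensive.

(* Clearing denominators by Cramer's rule, D x_i = u_i V with u_i integral, so
   in the coordinates given by the v_i the x_i become points u_i / D of the
   torus R^d / Z^d.  Two of them at l1-distance < 1 on the torus would give a
   lattice point in the interior of conv(+-v_i), which by hollowness is 0,
   i.e. x_i - x_j would lie in the sublattice.  So the l1-balls of radius 1/2
   around these points are disjoint, and each has volume 1/d!.  The volume
   count is done discretely: scaled by m D, each ball contains the 2^d C(r, d)
   integer points with nonzero coordinates and l1-norm at most r ~ m D / 2,
   all pairwise incongruent modulo m D; letting m grow leaves room for at most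
   d! points. *)

(** * Hollow lattices and the cross-polytope *)

Section CrossPolytope.
Variables (R : realFieldType) (d : nat) (v : 'I_d -> 'rV[R]_d).
Local Notation V := (\matrix_(i < d) v i).

Lemma sum_scale_rows (a : 'I_d -> R) : \sum_i a i *: v i = (\row_i a i) *m V.
Proof. by rewrite mulmx_sum_row; apply: eq_bigr => i _; rewrite rowK mxE. Qed.

Lemma in_sym_hull_l1 (a : 'rV[R]_d) : (0 < d)%N ->
  \sum_l `|a 0 l| <= 1 -> in_sym_hull v (a *m V).
Proof.
move=> d_gt0 a_le1.
(* Positive and negative parts of a, plus the slack spread evenly over all 2d weights. *)
set t := (1 - \sum_l `|a 0 l|) / (2 * d)%:R.
have t_ge0 : 0 <= t by apply: divr_ge0; rewrite ?subr_ge0.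
have pos_ge0 i : 0 <= `|a 0 i| + a 0 i by rewrite -lerBlDr sub0r ler_normr lexx orbT.
have neg_ge0 i : 0 <= `|a 0 i| - a 0 i by rewrite subr_ge0 ler_norm.
exists (fun i => (`|a 0 i| + a 0 i) / 2 + t), (fun i => (`|a 0 i| - a 0 i) / 2 + t).
split; [|split; [|split]].
- by move=> i; apply: addr_ge0 => //; apply: divr_ge0.
- by move=> i; apply: addr_ge0 => //; apply: divr_ge0.
- rewrite -big_split /= (eq_bigr (fun i => `|a 0 i| + t *+ 2)); last first.
    by move=> i _; rewrite mulr2n; field.
  rewrite big_split /= sumr_const card_ord /t -mulrnA -[_ *+ (2 * d)]mulr_natr.
  by field; rewrite pnatr_eq0 -lt0n.
- have {1}-> : a = \row_i a 0 i by apply/rowP => i; rewrite mxE.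
  rewrite -sum_scale_rows -big_split /=; apply: eq_bigr => i _.
  by rewrite scalerN -scalerBl; congr (_ *: _); field.
Qed.

Lemma in_interior_l1 (a : 'rV[R]_d) : (0 < d)%N -> V \in unitmx ->
  \sum_l `|a 0 l| < 1 -> in_interior (in_sym_hull v) (a *m V).
Proof.
move=> d_gt0 V_unit a_lt1; set W := invmx V.
(* An e-perturbation of a *m V moves the coordinates by at most e * S in l1-norm. *)
set S := \sum_l \sum_j `|W j l|.
have S_ge0 : 0 <= S by do 2![apply: sumr_ge0 => ? _].
set q := 1 - \sum_l `|a 0 l|.
have q_gt0 : 0 < q by rewrite subr_gt0.
exists (q / (1 + S)) => [|y near_y]; first by rewrite divr_gt0 // ltr_wpDr.
rewrite -(mulmxKV V_unit y); apply: in_sym_hull_l1 => //.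
have coord_le l : `|(y *m W) 0 l| <= `|a 0 l| + q / (1 + S) * \sum_j `|W j l|.
  rewrite -[y](subrK (a *m V)) mulmxDl mulmxK // addrC mxE.
  apply: le_trans (ler_normD _ _) _; rewrite lerD2l mxE mulr_sumr.
  apply: le_trans (ler_norm_sum _ _ _) _; apply: ler_sum => j _.
  by rewrite normrM; apply: ler_wpM2r => //; have := near_y j; rewrite !mxE => /ltW.
apply: le_trans (ler_sum _ (fun l _ => coord_le l)) _.
rewrite big_split /= -mulr_sumr -/S.
have : q / (1 + S) * S <= q by rewrite mulrAC ler_pdivrMr ?ltr_wpDr //; nra.
by rewrite /q; lra.
Qed.

End CrossPolytope.

Section HollowLattice.
Variables (R : realFieldType) (d : nat) (B : 'M[R]_d) (v : 'I_d -> 'rV[R]_d).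
Local Notation V := (\matrix_(i < d) v i).
Local Notation intmx := (map_mx (fun k : int => k%:~R : R)).
Hypothesis v_lattice : forall i, in_lattice B (v i).

Lemma lattice_basis_change : exists Z : 'M[int]_d, V = intmx Z *m B.
Proof.
have [Z hZ] := fin_all_exists v_lattice.
by exists (\matrix_i Z i); apply/row_matrixP => i; rewrite row_mul -map_row !rowK hZ.
Qed.

Lemma in_lattice_shift x x' (c : 'rV[int]_d) : in_lattice B x -> in_lattice B x' ->
  in_lattice B (x - x' + intmx c *m V).
Proof.
move=> [z ->] [z' ->]; have [Z ->] := lattice_basis_change.
by exists (z - z' + c *m Z); rewrite map_mxD map_mxB map_mxM mulmxDl mulmxBl mulmxA.
Qed.

(* With V = Z B, Cramer's rule gives det Z * (z B) = (z adj Z) V. *)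
Lemma lattice_int_coords : V \in unitmx -> exists2 D : nat, (0 < D)%N &
  forall x, in_lattice B x -> exists u : 'rV[int]_d, D%:R *: x = intmx u *m V.
Proof.
move=> V_unit; have [Z VZ] := lattice_basis_change.
have detZ_neq0 : \det Z != 0.
  move: V_unit; rewrite unitmxE VZ det_mulmx det_map_mx unitfE.
  by apply: contra => /eqP ->; rewrite mul0r.
exists `|\det Z|%N; first by rewrite absz_gt0.
move=> x [z ->]; exists (Num.sg (\det Z) *: (z *m \adj Z)).
rewrite VZ mulmxA -map_mxM -scalemxAl -mulmxA mul_adj_mx mul_mx_scalar scalerA.
by rewrite map_mxZ -scalemxAl -normrEsg -abszE pmulrn.
Qed.

Hypotheses (d_gt0 : (0 < d)%N) (V_unit : V \in unitmx).
Hypothesis hollow : forall x, in_lattice B x -> x != 0 ->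
  ~ in_interior (in_sym_hull v) x.

(* Otherwise x - x' + c V is a lattice point strictly inside the cross-polytope. *)
Lemma lattice_coords_separated (D : nat) x x' (u u' : 'rV[int]_d) :
  in_lattice B x -> in_lattice B x' ->
  D%:R *: x = intmx u *m V -> D%:R *: x' = intmx u' *m V ->
  ~ in_span_int v (x - x') ->
  forall c : 'I_d -> int, D%:Z <= \sum_l `|u 0 l - u' 0 l + D%:Z * c l|.
Proof.
move=> xL x'L xu x'u not_span c; rewrite leNgt; apply/negP => lt_D.
have D_gt0 : (0 < D%:R :> R).
  by rewrite ltr0n -ltz_nat; apply: le_lt_trans lt_D; apply: sumr_ge0.
set c_row := \row_l c l; set w := u - u' + D%:Z *: c_row.
set y := x - x' + intmx c_row *m V.
have yw : y = (D%:R^-1 *: intmx w) *m V.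
  rewrite -scalemxAl map_mxD map_mxB map_mxZ mulmxDl mulmxBl -xu -x'u -scalemxAl.
  by rewrite !scalerDr scalerN !scalerA pmulrn mulVf ?gt_eqF // !scale1r.
have w_small : \sum_l `|(D%:R^-1 *: intmx w) 0 l| < 1.
  have -> : \sum_l `|(D%:R^-1 *: intmx w) 0 l| = (\sum_l `|w 0 l|)%:~R / D%:R.
    rewrite rmorph_sum mulr_suml; apply: eq_bigr => l _.
    by rewrite !mxE normrM normfV normr_nat -intr_norm mulrC.
  rewrite ltr_pdivrMr // mul1r pmulrn ltr_int; apply: le_lt_trans lt_D.
  by under eq_bigr => l _ do rewrite !mxE.
have y0 : y = 0.
  case: (eqVneq y 0) => // y_neq0; exfalso.
  apply: (hollow (in_lattice_shift c_row xL x'L) y_neq0).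
  by rewrite -/y yw; apply: in_interior_l1.
apply: not_span; exists (fun l => - c l); rewrite sum_scale_rows.
move/eqP: y0; rewrite addr_eq0 => /eqP ->; rewrite -mulNmx; congr (_ *m _).
by apply/rowP => l; rewrite !mxE mulrNz.
Qed.

End HollowLattice.

(** * Counting points of an l1-packing on the discrete torus *)

Section SubsetGaps.
Variable r : nat.
Implicit Types A : {set 'I_r}.

Definition elems A : seq nat := [seq val x | x <- enum A].

Lemma sorted_elems A : sorted ltn (elems A).
Proof.
apply: (subseq_sorted ltn_trans (s2 := iota 0 r)); last exact: iota_ltn_sorted.
rewrite -val_enum_ord /elems; apply: map_subseq.
rewrite /enum_mem -enumT [X in subseq _ X](eq_filter (a2 := predT)) //.
by rewrite filter_predT filter_subseq.
Qed.

Lemma size_elems A : size (elems A) = #|A|.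
Proof. by rewrite size_map cardE. Qed.

Lemma nth_elems_lt A j : (j < #|A|)%N -> (nth 0%N (elems A) j < r)%N.
Proof.
rewrite -size_elems => /(mem_nth 0%N) /mapP [x _ ->]; exact: ltn_ord.
Qed.

(* The elements t_0 < t_1 < ... of A, preceded by t_(-1) = -1. *)
Definition shifted_elem A (j : nat) : int :=
  if j is j'.+1 then (nth 0%N (elems A) j')%:Z else -1.

Definition gap A (l : nat) : int := shifted_elem A l.+1 - shifted_elem A l.

Lemma gap_ge1 A l : (l < #|A|)%N -> 1 <= gap A l.
Proof.
rewrite /gap; case: l => [|j] lt_jA /=; first by rewrite opprK lerDr.
have := sorted_ltn_nth ltn_trans 0%N (sorted_elems A).
rewrite size_elems => /(_ j j.+1 (ltn_trans (ltnSn j) lt_jA) lt_jA (ltnSn j)).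
lia.
Qed.

Lemma sum_gap_le A : \sum_(l < #|A|) gap A l <= r%:Z.
Proof.
rewrite -(big_mkord xpredT (gap A)) telescope_sumr //.
case: #|A| (@nth_elems_lt A) => [|k] /= lt_elems; first by [].
by have := lt_elems k (ltnSn k); lia.
Qed.

Lemma gap_inj A A' : #|A| = #|A'| ->
  (forall l, (l < #|A|)%N -> gap A l = gap A' l) -> A = A'.
Proof.
move=> eq_card eq_gap.
have eq_shifted j : (j <= #|A|)%N -> shifted_elem A j = shifted_elem A' j.
  elim: j => [|j IHj] lt_jA //.
  by have := eq_gap j lt_jA; rewrite /gap IHj ?(ltnW lt_jA) // => /addIr.
have eq_elems : elems A = elems A'.
  apply: (eq_from_nth (x0 := 0%N)); first by rewrite !size_elems.
  by move=> j; rewrite size_elems => /eq_shifted [].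
by rewrite -(set_enum A) -(set_enum A') (inj_map val_inj eq_elems).
Qed.

End SubsetGaps.

(* A sign vector and a [k]-subset of [0, r) encode a point of Z^k with
   nonzero coordinates and l1-norm at most [r]. *)
Definition cross_point k r (s : {ffun 'I_k -> bool}) (A : {set 'I_r}) (l : 'I_k) : int :=
  if s l then gap A l else - gap A l.

Section CrossPoints.
Variables (k r : nat).
Implicit Types (s : {ffun 'I_k -> bool}) (A : {set 'I_r}).

Lemma norm_cross_point s A l : #|A| = k -> `|cross_point s A l| = gap A l.
Proof.
move=> cardA; have := @gap_ge1 _ A l; rewrite cardA ltn_ord => /(_ isT).
by rewrite /cross_point; case: (s l) => ?; rewrite ?normrN ger0_norm //; lia.
Qed.

Lemma sum_norm_cross_point s A : #|A| = k -> \sum_l `|cross_point s A l| <= r%:Z.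
Proof.
move=> cardA; under eq_bigr => l _ do rewrite norm_cross_point //.
by have := sum_gap_le A; rewrite cardA.
Qed.

Lemma norm_cross_point_le s A l : #|A| = k -> `|cross_point s A l| <= r%:Z.
Proof.
move=> cardA; apply: le_trans (sum_norm_cross_point s cardA).
by rewrite (bigD1 l) //= lerDl sumr_ge0.
Qed.

Lemma cross_point_inj s s' A A' : #|A| = k -> #|A'| = k ->
  cross_point s A =1 cross_point s' A' -> s = s' /\ A = A'.
Proof.
move=> cardA cardA' eq_pt.
have gapA (l : 'I_k) := @gap_ge1 _ A l.
have gapA' (l : 'I_k) := @gap_ge1 _ A' l.
rewrite cardA in gapA; rewrite cardA' in gapA'.
have eq_s : s = s'.
  apply/ffunP=> l; have := eq_pt l; have := gapA l (ltn_ord l).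
  have := gapA' l (ltn_ord l); rewrite /cross_point.
  by case: (s l); case: (s' l) => //; lia.
split=> //; apply: gap_inj; first by rewrite cardA cardA'.
move=> l; rewrite cardA => lt_lk; have := eq_pt (Ordinal lt_lk).
by rewrite /cross_point -eq_s; case: (s _) => // /oppr_inj.
Qed.

End CrossPoints.

Lemma card_le_incongruent (T : finType) (P : {pred T}) k (K : nat)
    (f : T -> 'I_k -> int) : (0 < K)%N ->
  {in P &, forall x y, (forall l, (f x l = f y l %[mod K])%Z) -> x = y} ->
  (#|P| <= K ^ k)%N.
Proof.
move=> K_gt0 f_inc.
have modK_ge0 z : 0 <= (z %% K)%Z by apply: modz_ge0; rewrite eqz_nat -lt0n.
have modK_lt z : (`|(z %% K)%Z|%N < K)%N.
  by have := @ltz_pmod z K; rewrite ltz_nat K_gt0 => /(_ isT); have := modK_ge0 z; lia.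
pose g x : {ffun 'I_k -> 'I_K} := [ffun l => Ordinal (modK_lt (f x l))].
have /leq_card_in : {in P &, injective g}.
  move=> x y Px Py /ffunP eq_g; apply: f_inc => // l.
  have /(congr1 val) := eq_g l; rewrite !ffunE /=.
  by have := modK_ge0 (f x l); have := modK_ge0 (f y l); lia.
by rewrite card_ffun !card_ord.
Qed.

Section Packing.
Variables (N k D m r : nat) (u : 'I_N -> 'I_k -> int).
Hypothesis u_sep : forall i j, i != j -> forall c : 'I_k -> int,
  D%:Z <= \sum_l `|u i l - u j l + D%:Z * c l|.
Hypothesis r_small : (2 * r < m * D)%N.

Definition packing_dom :=
  [set x : 'I_N * {ffun 'I_k -> bool} * {set 'I_r} | #|x.2| == k].

Definition packing_point (x : 'I_N * {ffun 'I_k -> bool} * {set 'I_r}) l : int :=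
  m%:Z * u x.1.1 l + cross_point x.1.2 x.2 l.

Lemma card_packing_dom : #|packing_dom| = (N * 2 ^ k * 'C(r, k))%N.
Proof.
have -> : packing_dom = setX setT [set A : {set 'I_r} | #|A| == k].
  by apply/setP => -[x A]; rewrite !inE.
by rewrite cardsX cardsT card_prod card_ffun card_bool !card_ord card_draws card_ord.
Qed.

Lemma packing_point_incongruent : {in packing_dom &, forall x y,
  (forall l, (packing_point x l = packing_point y l %[mod m * D])%Z) -> x = y}.
Proof.
move=> [[i s] A] [[j s'] A']; rewrite !inE /= => /eqP cardA /eqP cardA' cong.
have /fin_all_exists [c eq_c] : forall l, exists c : int,
    packing_point (i, s, A) l - packing_point (j, s', A') l = c * (m * D)%N%:Z.
  by move=> l; apply/dvdzP; rewrite -eqz_mod_dvd; apply/eqP; apply: cong.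
case: (eqVneq i j) eq_c => [<- | neq_ij] eq_c.
  suff [-> ->] : s = s' /\ A = A' by [].
  apply: (cross_point_inj cardA cardA') => l; have := eq_c l.
  have := norm_cross_point_le s l cardA; have := norm_cross_point_le s' l cardA'.
  rewrite /packing_point /= PoszM; move: r_small.
  case: (eqVneq (c l) 0) => [-> | ?]; first by lia.
  by nia.
have := u_sep neq_ij (fun l => - c l).
suff : m%:Z * \sum_l `|u i l - u j l + D%:Z * - c l| <= (2 * r)%:Z.
  by move: r_small; nia.
apply: le_trans (_ : \sum_l (`|cross_point s' A' l| + `|cross_point s A l|) <= _).
  rewrite mulr_sumr; apply: ler_sum => l _; apply: le_trans (ler_normB _ _).
  rewrite -[m%:Z]ger0_norm // -normrM le_eqVlt; apply/orP; left; apply/eqP.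
  by congr `|_|; have := eq_c l; rewrite /packing_point /= PoszM; nia.
by rewrite big_split /= mul2n -addnn PoszD lerD // sum_norm_cross_point.
Qed.

Lemma packing_count : (N * 2 ^ k * 'C(r, k) <= (m * D) ^ k)%N.
Proof.
rewrite -card_packing_dom; apply: card_le_incongruent packing_point_incongruent.
by move: r_small; lia.
Qed.

End Packing.

Lemma ffact_ge_expn n k : ((n.+1 - k) ^ k <= n ^_ k)%N.
Proof.
elim: k n => [|k IHk] [|n]; rewrite ?ffactn0 ?expn0 // ffactnS expnS subSS.
  by rewrite sub0n mul0n.
exact: leq_mul (leq_subr _ _) (IHk n).
Qed.

(* The integer form of (1 + x)^k (1 - k x) <= 1 for x = c / b. *)
Lemma expn_addn_mulB_le b c k : ((b + c) ^ k * (b - k * c) <= b ^ k.+1)%N.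
Proof.
elim: k => [|k IHk]; first by rewrite mul0n subn0 mul1n expn1.
have step : ((b + c) * (b - k.+1 * c) <= b * (b - k * c))%N by nia.
rewrite expnSr -mulnA (leq_trans (leq_mul (leqnn _) step)) //.
by rewrite mulnCA [X in (_ <= X)%N]expnS leq_mul2l IHk orbT.
Qed.

Lemma leq_of_expn_bound N f k b c : (N * (k * c) < b)%N ->
  (N * b ^ k <= f * (b + c) ^ k)%N -> (N <= f)%N.
Proof.
move=> lt_b le_pow.
have : (N * b ^ k * (b - k * c) <= f * b ^ k * b)%N.
  rewrite -[X in (_ <= X)%N]mulnA -expnSr.
  apply: leq_trans (leq_mul le_pow (leqnn (b - k * c))) _.
  by rewrite -mulnA leq_mul2l expn_addn_mulB_le orbT.
have b_gt0 : (0 < b ^ k)%N by rewrite expn_gt0; apply/orP; left; lia.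
rewrite mulnAC [X in (_ <= X)%N]mulnAC leq_pmul2r // => le_N.
rewrite leqNgt; apply/negP => lt_f; move: le_N lt_b; nia.
Qed.

Lemma l1_packing_le_fact N k D (u : 'I_N -> 'I_k -> int) : (0 < D)%N ->
  (forall i j, i != j -> forall c : 'I_k -> int,
     D%:Z <= \sum_l `|u i l - u j l + D%:Z * c l|) ->
  (N <= k`!)%N.
Proof.
move=> D_gt0 u_sep.
(* m is large enough for b := 2 (r + 1 - k) to exceed N k (2 k). *)
set m := (N * (k * (2 * k)) + 2 * k + 1)%N.
have m_le : (m <= m * D)%N by rewrite leq_pmulr.
set K := (m * D)%N in m_le *; set r := K.-1./2.
have r_bounds : (2 * r < K <= 2 * r + 2)%N.
  by have := odd_double_half K.-1; rewrite -/r -mul2n; move: m_le; lia.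
apply: (@leq_of_expn_bound N k`! k (2 * (r.+1 - k)) (2 * k)).
  by move: m_le r_bounds; rewrite /m; lia.
have -> : (2 * (r.+1 - k) + 2 * k = 2 * r.+1)%N by lia.
apply: (@leq_trans (N * 2 ^ k * 'C(r, k) * k`!)).
  by rewrite expnMn mulnA -[X in (_ <= X)%N]mulnA bin_ffact leq_mul2l ffact_ge_expn orbT.
rewrite mulnC leq_mul2l; apply/orP; right.
apply: leq_trans (packing_count u_sep (proj1 (andP r_bounds))) _.
case: (posnP k) => [-> // | k_gt0]; rewrite -/K leq_exp2r //; move: r_bounds; lia.
Qed.

Unset Implicit Arguments.

Theorem proposition11p2 (R : realFieldType) (d : nat) (hd : (1 <= d)%N)
  (B : 'M[R]_d) (hB : B \in unitmx)
  (v : 'I_d -> 'rV[R]_d)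
  (hvL : forall i, in_lattice B (v i))
  (hfree : row_free (\matrix_(i < d) v i))
  (hhollow : forall x, in_lattice B x -> x != 0 ->
                ~ in_interior (in_sym_hull v) x)
  (s : seq 'rV[R]_d)
  (hsL : forall x, x \in s -> in_lattice B x)
  (hinc : forall i j, (i < size s)%N -> (j < size s)%N -> i <> j ->
            ~ in_span_int v (nth 0 s i - nth 0 s j)) :
  (size s <= d`!)%N.
Proof.
have V_unit : \matrix_(i < d) v i \in unitmx by rewrite -row_free_unit.
have [D D_gt0 coords] := lattice_int_coords hvL V_unit.
have s_lattice (i : 'I_(size s)) : in_lattice B (nth 0 s i) by apply/hsL/mem_nth.
have /fin_all_exists [u hu] : forall i : 'I_(size s), exists u,
    D%:R *: nth 0 s i = map_mx (fun k : int => k%:~R) u *m \matrix_(i < d) v i.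
  by move=> i; apply/coords/s_lattice.
apply: (l1_packing_le_fact (u := fun i l => u i 0 l) D_gt0) => i j neq_ij.
apply: (lattice_coords_separated hvL hd V_unit hhollow (s_lattice i) (s_lattice j)
  (hu i) (hu j)).
by apply: hinc => // /val_inj eq_ij; rewrite eq_ij eqxx in neq_ij.
Qed.
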